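(* Let $\alpha\in\mathbb{R}$, let $p$ be a positive integer, $b\in\mathbb{R}$, and let $f$ be a real function defined on ${}_{b+p-1}\mathbb{N}=\{b+p-1,b+p-2,\dots\}$. Then for all $t\in{}_{b-p}\mathbb{N}$, $${}_{b}\nabla^{-\alpha}\,{}_{\ominus}\Delta^p f(t)={}_{\ominus}\Delta^p\,{}_{b}\nabla^{-\alpha}f(t)-\sum_{k=0}^{p-1}\frac{(b-t)^{\overline{\alpha-p+k}}}{\Gamma(\alpha+k-p+1)}\,{}_{\ominus}\Delta^k f(b).$$
   Context: Notation: ${}_{c}\mathbb{N}=\{c,c-1,\dots\}$, $\rho(t)=t-1$, $\Delta g(t)=g(t+1)-g(t)$, $\Delta^m=\Delta(\Delta^{m-1})$, ${}_{\ominus}\Delta^m g=(-1)^m\Delta^m g$. Rising factorial: $t^{\overline{\beta}}=\Gamma(t+\beta)/\Gamma(t)$ with $0^{\overline{\beta}}=0$; the reciprocal of $\Gamma$ at a pole is $0$. For $\gamma>0$ the nabla right fractional sum is ${}_{b}\nabla^{-\gamma}g(t)=\frac{1}{\Gamma(\gamma)}\sum_{s=t}^{b-1}(s-\rho(t))^{\overline{\gamma-1}}g(s)$, where a sum with upper limit smaller than lower limit is $0$ (so these sums vanish for $t\ge b$). For $\beta>0$ let $n=[\beta]+1$ with $[\beta]$ the greatest integer strictly less than $\beta$; the nabla right fractional difference is ${}_{b}\nabla^{\beta}g(t)={}_{\ominus}\Delta^n\,{}_{b}\nabla^{-(n-\beta)}g(t)=(-1)^n\Delta^n\,{}_{b}\nabla^{-(n-\beta)}g(t)$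 (order-$0$ operator = identity). In the claim, for $\alpha<0$ the symbol ${}_{b}\nabla^{-\alpha}$ means the nabla right fractional difference of order $-\alpha$, and for $\alpha=0$ it is the identity. *)

From Stdlib Require Import Reals ZArith ClassicalEpsilon.
Open Scope R_scope.

Fixpoint rsum (n : nat) (F : nat -> R) : R :=
  match n with
  | O => 0
  | S m => rsum m F + F m
  end.

(* Euler/Gauss product sequence for 1/Gamma:
   x (x+1) ... (x+m) / (m! m^x),  with m = n+1. *)
Definition rgamma_seq (x : R) (n : nat) : R :=
  prod_f_R0 (fun i => x + INR i) (S n) /
  (INR (fact (S n)) * Rpower (INR (S n)) x).

(* Reciprocal Gamma function 1/Gamma(x) = lim_m x(x+1)...(x+m)/(m! m^x);
   an entire function, equal to 0 exactly at the poles 0,-1,-2,... *)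
Definition rgamma (x : R) : R :=
  epsilon (inhabits 0) (fun l => Un_cv (rgamma_seq x) l).

(* Gamma(x) = 1 / (1/Gamma(x)).  At a pole, rgamma x = 0 and (Stdlib's
   convention / 0 = 0) Gamma x = 0; only 1/Gamma at poles (= 0) is used. *)
Definition Gamma (x : R) : R := / rgamma x.

(* Rising factorial t^{(beta)} = Gamma(t+beta)/Gamma(t)
   (equals 0 when t is a pole of Gamma, in particular 0^{(beta)} = 0). *)
Definition rising (t beta : R) : R := Gamma (t + beta) / Gamma t.

Definition rho (t : R) : R := t - 1.

Definition fdelta (g : R -> R) : R -> R := fun t => g (t + 1) - g t.
Fixpoint fdelta_n (m : nat) (g : R -> R) : R -> R :=
  match m with
  | O => g
  | S k => fdelta (fdelta_n k g)
  end.
Definition odelta (m : nat) (g : R -> R) : R -> R :=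
  fun t => (-1) ^ m * fdelta_n m g t.

(* Nabla right fractional sum of order gam > 0:
   b nabla^{-gam} g(t) = 1/Gamma(gam) * sum_{s=t}^{b-1} (s - rho t)^{(gam-1)} g(s),
   where s = t, t+1, ..., b-1 (there are b - t terms when b - t is a natural
   number; empty sum, i.e. 0, when t >= b). *)
Definition nabla_sum (b gam : R) (g : R -> R) (t : R) : R :=
  / Gamma gam *
  rsum (Z.to_nat (Int_part (b - t)))
       (fun i => rising ((t + INR i) - rho t) (gam - 1) * g (t + INR i)).

(* [beta] = greatest integer strictly less than beta  (= - up(-beta)). *)
Definition bracket (beta : R) : Z := (- up (- beta))%Z.
Definition nord (beta : R) : nat := Z.to_nat (bracket beta + 1).

Definition nabla_sum0 (b gam : R) (g : R -> R) : R -> R :=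
  if Req_EM_T gam 0 then g else nabla_sum b gam g.

Definition nabla_diff (b beta : R) (g : R -> R) : R -> R :=
  odelta (nord beta) (nabla_sum0 b (INR (nord beta) - beta) g).

(* The operator written  b nabla^{-alpha}  in the claim, for alpha real:
   fractional sum of order alpha if alpha > 0, identity if alpha = 0,
   fractional difference of order -alpha if alpha < 0. *)
Definition nabla_op (b alpha : R) (g : R -> R) : R -> R :=
  if Rlt_dec 0 alpha then nabla_sum b alpha g
  else if Req_EM_T alpha 0 then g
  else nabla_diff b (- alpha) g.

From Stdlib Require Import Reals ZArith ClassicalEpsilon FunctionalExtensionality Lra Lia.
Open Scope R_scope.

(* 1/Gamma is defined by the Gauss product, so we first show that the product
   converges for every x (monotone and bounded below for x > 0, then the
   functional equation 1/Gamma(x) = x/Gamma(x+1) transports convergence to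
   all x), and that 1/Gamma vanishes exactly at 0, -1, -2, ...  The boundary
   kernels are handled as K_be(x) = x^{(be)}/Gamma(be+1) written with 1/Gamma
   only, whose backward difference in x is K_{be-1}(x).  The case p = 1 is a
   summation by parts for the fractional sum (order > 0), the identity (order
   0), and, for negative orders, the same formula inside a fractional sum of
   order in [0,1) followed by (-Delta)^n, which lowers the kernel order by n.
   The theorem follows by induction on p, writing (-Delta)^(p+1) f as
   (-Delta)^p (-Delta f). *)

(** * The reciprocal Gamma function *)

Lemma exp_le_compat a b : a <= b -> exp a <= exp b.
Proof. intros [H|H]; [left; apply exp_increasing; auto | subst; lra]. Qed.

Lemma ln_diff_le a b : 0 < a -> 0 < b -> ln b - ln a <= b / a - 1.
Proof.
  intros Ha Hb.
  assert (E : ln b - ln a = ln (b / a)).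
  { unfold Rdiv. rewrite ln_mult, ln_Rinv; try lra.
    apply Rinv_0_lt_compat; lra. }
  rewrite E. pose proof (exp_ineq1_le (ln (b / a))) as H.
  rewrite exp_ln in H; [lra | apply Rdiv_lt_0_compat; lra].
Qed.

(* Logarithm of the ratio of two consecutive terms of the Gauss sequence. *)
Definition gauss_log_ratio (x : R) (n : nat) : R :=
  let N := INR (S n) in let N' := INR (S (S n)) in
  ln (x + N') - ln N' - x * (ln N' - ln N).

Lemma rgamma_seq_S x n : 0 < x ->
  rgamma_seq x (S n) = rgamma_seq x n * exp (gauss_log_ratio x n).
Proof.
  intros Hx. unfold rgamma_seq, gauss_log_ratio, Rpower.
  change (prod_f_R0 (fun i => x + INR i) (S (S n)))
    with (prod_f_R0 (fun i => x + INR i) (S n) * (x + INR (S (S n)))).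
  rewrite (fact_simpl (S n)), mult_INR.
  assert (H1 : 0 < INR (S n)) by (apply lt_0_INR; lia).
  assert (H2 : 0 < INR (S (S n))) by (apply lt_0_INR; lia).
  set (N := INR (S n)) in *. set (N' := INR (S (S n))) in *.
  replace (ln (x + N') - ln N' - x * (ln N' - ln N)) with
    (ln (x + N') + - ln N' + - (x * ln N') + x * ln N) by ring.
  rewrite !exp_plus, !exp_Ropp, !exp_ln by lra.
  pose proof (INR_fact_neq_0 (S n)).
  pose proof (exp_pos (x * ln N)). pose proof (exp_pos (x * ln N')).
  field. repeat split; lra.
Qed.

(* For x > 0 the Gauss sequence decreases, and its log-ratios are summable:
   - x(1+x)/(N(N+1)) <= log-ratio <= 0 with N = n+1. *)
Lemma gauss_log_ratio_bounds x n : 0 < x ->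
  - (x * (1 + x)) / (INR (S n) * INR (S (S n))) <= gauss_log_ratio x n <= 0.
Proof.
  intros Hx. unfold gauss_log_ratio.
  assert (H1 : 0 < INR (S n)) by (apply lt_0_INR; lia).
  assert (HN : INR (S (S n)) = INR (S n) + 1) by apply S_INR.
  set (N := INR (S n)) in *. set (N' := INR (S (S n))) in *.
  pose proof (ln_diff_le N' (x + N') ltac:(lra) ltac:(lra)).
  pose proof (ln_diff_le (x + N') N' ltac:(lra) ltac:(lra)).
  pose proof (ln_diff_le N N' ltac:(lra) ltac:(lra)).
  pose proof (ln_diff_le N' N ltac:(lra) ltac:(lra)).
  split.
  - assert (V : (1 - N' / (x + N')) - x * (N' / N - 1) + x * (1 + x) / (N * N')
                 = x * (x * x + x) / (N * N' * (x + N'))) by (rewrite HN; field; lra).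
    assert (0 <= x * (x * x + x) / (N * N' * (x + N'))).
    { apply Rmult_le_pos; [nra |]. left; apply Rinv_0_lt_compat.
      apply Rmult_lt_0_compat; [apply Rmult_lt_0_compat |]; lra. }
    assert (x * (ln N' - ln N) <= x * (N' / N - 1)) by (apply Rmult_le_compat_l; lra).
    unfold Rdiv at 1. rewrite Ropp_mult_distr_l. lra.
  - assert (U : (x + N') / N' - 1 - x * (1 - N / N') = 0) by (rewrite HN; field; lra).
    assert (x * (1 - N / N') <= x * (ln N' - ln N)) by (apply Rmult_le_compat_l; lra).
    lra.
Qed.

Lemma rgamma_seq_0_pos x : 0 < x -> 0 < rgamma_seq x 0.
Proof.
  intros Hx. unfold rgamma_seq. apply Rdiv_lt_0_compat.
  - simpl. nra.
  - apply Rmult_lt_0_compat; [simpl; lra | unfold Rpower; apply exp_pos].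
Qed.

(* Telescoping the lower log-ratio bound, using 1/(N(N+1)) = 1/N - 1/(N+1). *)
Lemma rgamma_seq_lower x : 0 < x -> forall n,
  rgamma_seq x 0 * exp (- (x * (1 + x)) * (1 - / INR (S n))) <= rgamma_seq x n.
Proof.
  intros Hx. induction n as [|n IH].
  - replace (- (x * (1 + x)) * (1 - / INR 1)) with 0 by (simpl; field).
    rewrite exp_0; lra.
  - rewrite rgamma_seq_S by auto.
    destruct (gauss_log_ratio_bounds x n Hx) as [Hl _].
    assert (H1 : 0 < INR (S n)) by (apply lt_0_INR; lia).
    assert (HN : INR (S (S n)) = INR (S n) + 1) by apply S_INR.
    set (c := x * (1 + x)) in *.
    set (d := - c / (INR (S n) * INR (S (S n)))) in *.
    assert (E : - c * (1 - / INR (S (S n))) = - c * (1 - / INR (S n)) + d).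
    { unfold d. rewrite HN. field. lra. }
    rewrite E, exp_plus, <- Rmult_assoc.
    pose proof (rgamma_seq_0_pos x Hx). pose proof (exp_pos (- c * (1 - / INR (S n)))).
    pose proof (exp_pos d). pose proof (exp_le_compat _ _ Hl).
    apply Rle_trans with (rgamma_seq x n * exp d).
    + apply Rmult_le_compat_r; lra.
    + apply Rmult_le_compat_l; nra.
Qed.

Lemma cv_const c : Un_cv (fun _ => c) c.
Proof. intros e He. exists O. intros. rewrite Rdist_eq. lra. Qed.

(* For x > 0 the Gauss sequence is decreasing and bounded below by a positive
   constant, hence converges to a positive limit. *)
Lemma rgamma_seq_cv_pos x : 0 < x -> exists l, Un_cv (rgamma_seq x) l /\ 0 < l.
Proof.
  intros Hx.
  set (c := x * (1 + x)). assert (Hc : 0 <= c) by (unfold c; nra).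
  set (K := rgamma_seq x 0 * exp (- c)).
  assert (HK : 0 < K) by (apply Rmult_lt_0_compat; [apply rgamma_seq_0_pos | apply exp_pos]; auto).
  assert (Hb : forall n, K <= rgamma_seq x n).
  { intro n. eapply Rle_trans; [| apply (rgamma_seq_lower x Hx n)].
    apply Rmult_le_compat_l; [left; apply rgamma_seq_0_pos; auto |].
    apply exp_le_compat. fold c.
    assert (0 < / INR (S n)) by (apply Rinv_0_lt_compat, lt_0_INR; lia). nra. }
  assert (Hd : Un_decreasing (rgamma_seq x)).
  { intro n. rewrite rgamma_seq_S by auto.
    destruct (gauss_log_ratio_bounds x n Hx) as [_ Hu].
    pose proof (Hb n). rewrite <- (Rmult_1_r (rgamma_seq x n)) at 2.
    apply Rmult_le_compat_l; [lra |]. rewrite <- exp_0. apply exp_le_compat, Hu. }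
  assert (Hl : has_lb (rgamma_seq x)).
  { exists (- K). intros y [i ->]. unfold opp_seq. pose proof (Hb i). lra. }
  destruct (decreasing_cv _ Hd Hl) as [l Hcv].
  exists l. split; [exact Hcv |].
  assert (K <= l).
  { apply (Rle_cv_lim (Un := fun _ => K) (Vn := rgamma_seq x)); auto using cv_const. }
  lra.
Qed.

Lemma cv_ratio_to_1 x : Un_cv (fun n => INR (S n) / (x + INR (S n) + 1)) 1.
Proof.
  intros eps He.
  destruct (INR_unbounded (Rabs x + 1 + Rabs (x + 1) / eps)) as [M HM].
  exists M. intros n Hn.
  assert (HMn : INR M <= INR (S n)) by (apply le_INR; lia).
  set (N := INR (S n)) in *. set (D := x + N + 1).
  pose proof (Rle_abs x). pose proof (Rle_abs (- x)). rewrite Rabs_Ropp in *.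
  assert (0 <= Rabs (x + 1) / eps) by (apply Rmult_le_pos; [apply Rabs_pos | left; apply Rinv_0_lt_compat; lra]).
  assert (HD : Rabs (x + 1) / eps < D) by (unfold D; lra).
  assert (HeD : Rabs (x + 1) < eps * D).
  { apply (Rmult_lt_compat_l eps) in HD; [| lra].
    replace (eps * (Rabs (x + 1) / eps)) with (Rabs (x + 1)) in HD by (field; lra). lra. }
  unfold Rdist. replace (N / D - 1) with (- (x + 1) / D) by (unfold D; field; lra).
  unfold Rdiv. rewrite Rabs_mult, Rabs_Ropp, Rabs_inv, (Rabs_right D) by lra.
  apply (Rmult_lt_reg_r D); [lra |]. rewrite Rmult_assoc, Rinv_l by lra. lra.
Qed.

Lemma prod_shift x k :
  prod_f_R0 (fun i => x + INR i) k * (x + INR k + 1) = x * prod_f_R0 (fun i => x + 1 + INR i) k.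
Proof.
  induction k as [|k IH]; [simpl; ring |].
  change (prod_f_R0 (fun i => x + INR i) k * (x + INR (S k)) * (x + INR (S k) + 1)
          = x * (prod_f_R0 (fun i => x + 1 + INR i) k * (x + 1 + INR (S k)))).
  rewrite <- Rmult_assoc, <- IH, S_INR. ring.
Qed.

(* The functional equation at the level of the approximating sequences:
   the n-th term at x is x times the n-th term at x+1, up to a factor -> 1. *)
Lemma rgamma_seq_shift x n : x + INR (S n) + 1 <> 0 ->
  rgamma_seq x n = x * rgamma_seq (x + 1) n * (INR (S n) / (x + INR (S n) + 1)).
Proof.
  intros Hne. unfold rgamma_seq.
  assert (H1 : 0 < INR (S n)) by (apply lt_0_INR; lia).
  rewrite Rpower_plus, Rpower_1 by auto.
  pose proof (prod_shift x (S n)) as HP.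
  set (P := prod_f_R0 (fun i => x + INR i) (S n)) in *.
  set (P' := prod_f_R0 (fun i => x + 1 + INR i) (S n)) in *.
  replace P with (x * P' / (x + INR (S n) + 1)) by (rewrite <- HP; field; auto).
  pose proof (INR_fact_neq_0 (S n)).
  assert (0 < Rpower (INR (S n)) x) by (unfold Rpower; apply exp_pos).
  field. repeat split; lra.
Qed.

Lemma rgamma_seq_cv_shift x l : Un_cv (rgamma_seq (x + 1)) l -> Un_cv (rgamma_seq x) (x * l).
Proof.
  intros H.
  destruct (INR_unbounded (- x - 2)) as [N0 HN0].
  apply (CV_shift _ N0).
  apply Un_cv_ext with
    (fun n => x * rgamma_seq (x + 1) (n + N0) * (INR (S (n + N0)) / (x + INR (S (n + N0)) + 1))).
  { intros n. symmetry. apply rgamma_seq_shift.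
    assert (INR N0 <= INR (n + N0)) by (apply le_INR; lia). rewrite S_INR. lra. }
  replace (x * l) with (x * l * 1) by ring.
  apply CV_mult.
  - apply (CV_mult (fun _ => x)); [apply cv_const |].
    apply (CV_shift' _ N0 l H).
  - apply (CV_shift' (fun n => INR (S n) / (x + INR (S n) + 1)) N0), cv_ratio_to_1.
Qed.

(* The Gauss sequence converges for every x: shift x into (0, oo) and go back
   with the functional equation. *)
Lemma rgamma_seq_cv_ex : forall k x, 0 < x + INR k -> exists l, Un_cv (rgamma_seq x) l.
Proof.
  induction k as [|k IH]; intros x Hx.
  - simpl in Hx. destruct (rgamma_seq_cv_pos x) as [l [Hl _]]; [lra | eauto].
  - rewrite S_INR in Hx. destruct (IH (x + 1)) as [l Hl]; [lra |].
    exists (x * l). apply rgamma_seq_cv_shift, Hl.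
Qed.

Lemma rgamma_cv x : Un_cv (rgamma_seq x) (rgamma x).
Proof.
  unfold rgamma. apply epsilon_spec.
  destruct (INR_unbounded (- x)) as [k Hk].
  apply (rgamma_seq_cv_ex k). lra.
Qed.

Lemma rgamma_rec x : rgamma x = x * rgamma (x + 1).
Proof. apply (UL_sequence (rgamma_seq x)); [apply rgamma_cv | apply rgamma_seq_cv_shift, rgamma_cv]. Qed.

Lemma rgamma_pos x : 0 < x -> 0 < rgamma x.
Proof.
  intros Hx. destruct (rgamma_seq_cv_pos x Hx) as [l [Hl Hp]].
  rewrite (UL_sequence _ _ _ (rgamma_cv x) Hl). exact Hp.
Qed.

Lemma rgamma_nonpos_int k : rgamma (- INR k) = 0.
Proof.
  induction k as [|k IH]; rewrite rgamma_rec.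
  - simpl. ring.
  - replace (- INR (S k) + 1) with (- INR k) by (rewrite S_INR; ring).
    rewrite IH. ring.
Qed.

Lemma rgamma_eq0 y : rgamma y = 0 -> exists j, y = - INR j.
Proof.
  destruct (INR_unbounded (- y)) as [k Hk].
  revert y Hk. induction k as [|k IH]; intros y Hk H0.
  - simpl in Hk. pose proof (rgamma_pos y). lra.
  - rewrite S_INR in Hk.
    destruct (Req_dec y 0) as [-> | Hy]; [exists O; simpl; ring |].
    rewrite rgamma_rec in H0. apply Rmult_integral in H0.
    destruct H0 as [H0 | H0]; [contradiction |].
    destruct (IH (y + 1)) as [j Hj]; [lra | exact H0 |].
    exists (S j). rewrite S_INR. lra.
Qed.

(** * Finite sums and backward-signed differences *)

Lemma rsum_ext n F G : (forall i, (i < n)%nat -> F i = G i) -> rsum n F = rsum n G.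
Proof. induction n as [|n IH]; intros H; simpl; [reflexivity |]. rewrite IH, H; auto. Qed.

Lemma rsum_lin n F G a c :
  rsum n (fun i => a * F i + c * G i) = a * rsum n F + c * rsum n G.
Proof. induction n as [|n IH]; simpl; [ring |]. rewrite IH. ring. Qed.

Lemma rsum_first n F : rsum (S n) F = F O + rsum n (fun k => F (S k)).
Proof. induction n as [|n IH]; simpl in *; [ring |]. rewrite IH. ring. Qed.

Lemma odelta_0 F t : odelta 0 F t = F t.
Proof. unfold odelta. simpl. ring. Qed.

Lemma odelta_1 F t : odelta 1 F t = F t - F (t + 1).
Proof. unfold odelta. simpl. unfold fdelta. ring. Qed.

Lemma odelta_S k F t : odelta (S k) F t = odelta k F t - odelta k F (t + 1).
Proof. unfold odelta. cbn [fdelta_n pow]. unfold fdelta. ring. Qed.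

Lemma odelta_lin k : forall t F G H a c,
  (forall j, (j <= k)%nat -> F (t + INR j) = a * G (t + INR j) + c * H (t + INR j)) ->
  odelta k F t = a * odelta k G t + c * odelta k H t.
Proof.
  induction k as [|k IH]; intros t F G H a c Hj.
  - rewrite !odelta_0. specialize (Hj O (le_n O)). simpl in Hj. rewrite Rplus_0_r in Hj. exact Hj.
  - rewrite !odelta_S, (IH t F G H a c), (IH (t + 1) F G H a c).
    + ring.
    + intros j Hjk. replace (t + 1 + INR j) with (t + INR (S j)) by (rewrite S_INR; ring).
      apply Hj. lia.
    + intros j Hjk. apply Hj. lia.
Qed.

Lemma odelta_comp_1 k : forall F t, odelta k (odelta 1 F) t = odelta (S k) F t.
Proof.
  induction k as [|k IH]; intros F t; [apply odelta_0 |].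
  rewrite odelta_S, !IH, <- odelta_S. reflexivity.
Qed.

Lemma odelta_1_comp k F t : odelta 1 (odelta k F) t = odelta (S k) F t.
Proof. rewrite odelta_1, odelta_S. reflexivity. Qed.

(** * The kernel of the summation-by-parts formula *)

Lemma Gamma_inv x : / Gamma x = rgamma x.
Proof. unfold Gamma. apply Rinv_inv. Qed.

Lemma rising_rgamma x be : rising x be = rgamma x / rgamma (x + be).
Proof. unfold rising, Gamma, Rdiv. rewrite Rinv_inv. ring. Qed.

(* The kernel x^{(be)} / Gamma(be+1), written with 1/Gamma only, so that it is
   meaningful (and correct) at the poles of Gamma. *)
Definition rising_kernel (be x : R) : R := rgamma x / rgamma (x + be) * rgamma (be + 1).

Lemma rising_kernel_ext b1 b2 x1 x2 : b1 = b2 -> x1 = x2 -> rising_kernel b1 x1 = rising_kernel b2 x2.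
Proof. intros -> ->; reflexivity. Qed.

Lemma rising_kernel_nabla be x : rgamma (x + be - 1) <> 0 \/ rgamma (be + 1) = 0 ->
  rising_kernel be x - rising_kernel be (x - 1) = rising_kernel (be - 1) x.
Proof.
  unfold rising_kernel.
  replace (be - 1 + 1) with be by ring.
  replace (x + (be - 1)) with (x + be - 1) by ring.
  replace (x - 1 + be) with (x + be - 1) by ring.
  assert (Hb : rgamma be = be * rgamma (be + 1)) by apply rgamma_rec.
  intros [H | H].
  - assert (H1 : rgamma (x + be - 1) = (x + be - 1) * rgamma (x + be)).
    { rewrite rgamma_rec. f_equal. f_equal. ring. }
    assert (H2 : rgamma (x - 1) = (x - 1) * rgamma x).
    { rewrite rgamma_rec. f_equal. f_equal. ring. }
    rewrite H1 in *. rewrite H2, Hb.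
    assert (x + be - 1 <> 0) by (intro E; rewrite E in H; lra).
    assert (rgamma (x + be) <> 0) by (intro E; rewrite E in H; lra).
    field. auto.
  - rewrite Hb, H. unfold Rdiv. ring.
Qed.

Lemma odelta_rising_kernel c be : forall k t,
  (forall i j, (i + j < k)%nat ->
     rgamma (c - t + be - INR (i + j) - 1) <> 0 \/ rgamma (be - INR j + 1) = 0) ->
  odelta k (fun s => rising_kernel be (c - s)) t = rising_kernel (be - INR k) (c - t).
Proof.
  induction k as [|k IH]; intros t H.
  - rewrite odelta_0. apply rising_kernel_ext; simpl; ring.
  - rewrite odelta_S, (IH t), (IH (t + 1)).
    + replace (c - (t + 1)) with (c - t - 1) by ring.
      rewrite rising_kernel_nabla.
      * apply rising_kernel_ext; [rewrite S_INR |]; ring.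
      * destruct (H O k ltac:(lia)) as [E | E]; [left | right; exact E].
        replace (c - t + (be - INR k) - 1) with (c - t + be - INR (0 + k) - 1) by (simpl; ring).
        exact E.
    + intros i j Hij. replace (c - (t + 1) + be - INR (i + j) - 1)
        with (c - t + be - INR (S i + j) - 1) by (rewrite plus_INR, S_INR, plus_INR; ring).
      apply H. lia.
    + intros i j Hij. apply H. lia.
Qed.

(** * The nabla right fractional sum on the grid b - n *)

Lemma Int_part_IZR z : Int_part (IZR z) = z.
Proof. symmetry. apply Int_part_spec. lra. Qed.

Lemma nabla_sum_grid b ga g n : nabla_sum b ga g (b - INR n) =
  rgamma ga * rsum n (fun i => rising (INR i + 1) (ga - 1) * g (b - INR n + INR i)).
Proof.
  unfold nabla_sum. rewrite Gamma_inv.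
  replace (b - (b - INR n)) with (INR n) by ring.
  rewrite Int_part_INR, Nat2Z.id. f_equal. apply rsum_ext; intros i _.
  unfold rho. f_equal. f_equal. ring.
Qed.

Lemma nabla_sum_beyond b ga g z : (z <= 0)%Z -> nabla_sum b ga g (b - IZR z) = 0.
Proof.
  intros Hz. unfold nabla_sum.
  replace (b - (b - IZR z)) with (IZR z) by ring.
  rewrite Int_part_IZR. replace (Z.to_nat z) with O by lia. simpl. ring.
Qed.

Lemma rgamma_nonpos_IZR z : (z <= 0)%Z -> rgamma (IZR z) = 0.
Proof.
  intros Hz. replace (IZR z) with (- INR (Z.to_nat (- z))); [apply rgamma_nonpos_int |].
  rewrite INR_IZR_INZ, Z2Nat.id, opp_IZR by lia. ring.
Qed.

(* Summation by parts, order one: for ga > 0 and t = b - z on the grid,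
   b nabla^{-ga} (-Delta f)(t) = -Delta (b nabla^{-ga} f)(t) - (b-t)^{(ga-1)}/Gamma(ga) f(b). *)
Lemma nabla_sum_odelta_1 b ga f z :
  nabla_sum b ga (odelta 1 f) (b - IZR z) =
  odelta 1 (nabla_sum b ga f) (b - IZR z) - rising_kernel (ga - 1) (IZR z) * f b.
Proof.
  rewrite odelta_1.
  destruct (Z_le_gt_dec z 0) as [Hz | Hz].
  - replace (b - IZR z + 1) with (b - IZR (z - 1)) by (rewrite minus_IZR; ring).
    rewrite !nabla_sum_beyond by lia.
    unfold rising_kernel. rewrite rgamma_nonpos_IZR by exact Hz. unfold Rdiv. ring.
  - replace (IZR z) with (INR (S (Z.to_nat (z - 1)))).
    2:{ rewrite S_INR, INR_IZR_INZ, Z2Nat.id, minus_IZR by lia. ring. }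
    set (m := Z.to_nat (z - 1)).
    replace (b - INR (S m) + 1) with (b - INR m) by (rewrite S_INR; ring).
    rewrite !nabla_sum_grid.
    set (W := fun i => rising (INR i + 1) (ga - 1)).
    set (s := b - INR (S m)).
    rewrite (rsum_ext (S m) _ (fun i => 1 * (W i * f (s + INR i)) + (-1) * (W i * f (s + INR i + 1)))).
    2:{ intros i _. rewrite odelta_1. unfold W. ring. }
    rewrite rsum_lin.
    change (rsum (S m) (fun i => W i * f (s + INR i + 1)))
      with (rsum m (fun i => W i * f (s + INR i + 1)) + W m * f (s + INR m + 1)).
    rewrite (rsum_ext m (fun i => W i * f (s + INR i + 1)) (fun i => W i * f (b - INR m + INR i))).
    2:{ intros i _. unfold s. rewrite S_INR. f_equal. f_equal. ring. }
    replace (s + INR m + 1) with b by (unfold s; rewrite S_INR; ring).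
    assert (HW : rising_kernel (ga - 1) (INR (S m)) = rgamma ga * W m).
    { unfold rising_kernel, W. rewrite rising_rgamma, S_INR.
      replace (ga - 1 + 1) with ga by ring. unfold Rdiv. ring. }
    rewrite HW. unfold W. ring.
Qed.

(** * The operator b nabla^{-alpha} and the case p = 1 *)

Lemma nabla_op_pos b a g : 0 < a -> nabla_op b a g = nabla_sum b a g.
Proof. intros H. unfold nabla_op. destruct (Rlt_dec 0 a); [reflexivity | lra]. Qed.

Lemma nabla_op_0 b g : nabla_op b 0 g = g.
Proof. unfold nabla_op. destruct (Rlt_dec 0 0); [lra |]. destruct (Req_EM_T 0 0); [reflexivity | lra]. Qed.

Lemma nabla_op_neg b a g : a < 0 ->
  nabla_op b a g = odelta (nord (- a)) (nabla_sum0 b (INR (nord (- a)) - - a) g).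
Proof.
  intros H. unfold nabla_op. destruct (Rlt_dec 0 a); [lra |].
  destruct (Req_EM_T a 0); [lra | reflexivity].
Qed.

Lemma nord_bounds be : 0 < be -> 0 <= INR (nord be) - be < 1.
Proof.
  intros H. unfold nord, bracket.
  destruct (archimed (- be)) as [H1 H2].
  set (u := up (- be)) in *.
  assert (Hu : (u <= 0)%Z).
  { destruct (Z_le_gt_dec u 0) as [| Hgt]; [assumption |].
    assert (1 <= IZR u) by (apply IZR_le; lia). lra. }
  rewrite INR_IZR_INZ, Z2Nat.id, plus_IZR, opp_IZR by lia. lra.
Qed.

Lemma no_int_in_01 (w : Z) : ~ (0 < IZR w < 1).
Proof.
  intros [H1 H2]. apply lt_IZR in H1. change 1 with (IZR 1) in H2. apply lt_IZR in H2. lia.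
Qed.

(* For a < 0 the
   operator is (-Delta)^n of a fractional sum of order ga = n + a in [0, 1):
   apply the order-one summation by parts inside, then (-Delta)^n lowers the
   order of the kernel from ga - 1 to a - 1. *)
Lemma nabla_op_odelta_1 b a f s : (exists m, s = b - 1 - INR m) ->
  nabla_op b a (odelta 1 f) s = odelta 1 (nabla_op b a f) s - rising_kernel (a - 1) (b - s) * f b.
Proof.
  intros [m Hs].
  assert (Hz : s = b - IZR (Z.of_nat (S m))) by (rewrite <- INR_IZR_INZ, S_INR; lra).
  destruct (Rtotal_order a 0) as [Hn | [H0 | Hp]].
  - rewrite !nabla_op_neg by exact Hn.
    pose proof (nord_bounds (- a) ltac:(lra)) as Hg.
    set (n := nord (- a)) in *. set (ga := INR n - - a) in *.
    unfold nabla_sum0. destruct (Req_EM_T ga 0) as [E | E].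
    + (* ga = 0: a = -n is a pole, and the kernel vanishes *)
      rewrite odelta_comp_1, odelta_1_comp.
      unfold rising_kernel. replace (a - 1 + 1) with (- INR n) by (unfold ga in E; lra).
      rewrite rgamma_nonpos_int. unfold Rdiv. ring.
    + rewrite (odelta_lin n s (nabla_sum b ga (odelta 1 f)) (odelta 1 (nabla_sum b ga f))
                 (fun x => rising_kernel (ga - 1) (b - x)) 1 (- f b)).
      * rewrite odelta_comp_1, odelta_1_comp, odelta_rising_kernel.
        -- replace (ga - 1 - INR n) with (a - 1) by (unfold ga; ring). ring.
        -- (* ga is not an integer, so no argument of 1/Gamma here is a pole *)
           intros i j _. left. intro Z0. apply rgamma_eq0 in Z0. destruct Z0 as [q Hq].
           apply (no_int_in_01 (Z.of_nat (i + j) + 1 - Z.of_nat m - Z.of_nat q)).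
           rewrite !minus_IZR, plus_IZR, <- !INR_IZR_INZ.
           rewrite Hs in Hq. lra.
      * intros j _.
        replace (s + INR j) with (b - IZR (Z.of_nat (S m) - Z.of_nat j))
          by (rewrite minus_IZR, <- !INR_IZR_INZ, S_INR; lra).
        rewrite nabla_sum_odelta_1.
        replace (b - (b - IZR (Z.of_nat (S m) - Z.of_nat j))) with (IZR (Z.of_nat (S m) - Z.of_nat j)) by ring.
        ring.
  - subst a. rewrite !nabla_op_0. unfold rising_kernel.
    replace (0 - 1 + 1) with (- INR 0) by (simpl; ring).
    rewrite rgamma_nonpos_int. unfold Rdiv. ring.
  - rewrite !nabla_op_pos, Hz, nabla_sum_odelta_1 by exact Hp.
    replace (b - (b - IZR (Z.of_nat (S m)))) with (IZR (Z.of_nat (S m))) by ring. reflexivity.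
Qed.

(* Writing
   (-Delta)^(p+1) f = (-Delta)^p (-Delta f), the induction hypothesis for
   -Delta f and the case p = 1 applied at t, ..., t+p combine; the boundary
   term of the case p = 1 becomes the k = 0 term of the new sum. *)
Lemma nabla_op_odelta b a : forall p f m,
  nabla_op b a (odelta (S p) f) (b - INR (S p) - INR m) =
  odelta (S p) (nabla_op b a f) (b - INR (S p) - INR m)
  - rsum (S p) (fun k => rising_kernel (a - INR (S p) + INR k) (INR (S p) + INR m) * odelta k f b).
Proof.
  induction p as [|p' IH]; intros f m.
  - rewrite nabla_op_odelta_1 by (exists m; simpl; ring).
    simpl rsum. rewrite odelta_0, Rplus_0_l.
    f_equal. f_equal. apply rising_kernel_ext; simpl; ring.
  - set (p := S p') in *.
    assert (Hcomp : odelta (S p) f = odelta p (odelta 1 f))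
      by (apply functional_extensionality; intros; symmetry; apply odelta_comp_1).
    assert (Ht : b - INR (S p) - INR m = b - INR p - INR (S m)) by (rewrite !S_INR; ring).
    rewrite Hcomp, Ht, IH.
    set (t := b - INR p - INR (S m)).
    rewrite (odelta_lin p t (nabla_op b a (odelta 1 f)) (odelta 1 (nabla_op b a f))
                 (fun x => rising_kernel (a - 1) (b - x)) 1 (- f b)).
    2:{ intros j Hj. rewrite nabla_op_odelta_1; [ring |]. exists (p - j + m)%nat.
        unfold t. rewrite plus_INR, minus_INR, S_INR by lia. ring. }
    rewrite odelta_comp_1, odelta_rising_kernel.
    2:{ (* a pole at an argument here forces a - 1 - j + 1 to be a pole too *)
        intros i j Hij.
        destruct (Req_dec (rgamma (b - t + (a - 1) - INR (i + j) - 1)) 0) as [Hz | Hz];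
          [right | left; exact Hz].
        apply rgamma_eq0 in Hz. destruct Hz as [q Hq].
        replace (a - 1 - INR j + 1) with (- INR (q + m + (p - S i))) by
          (rewrite !plus_INR, minus_INR by lia; unfold t in Hq;
           rewrite plus_INR, !S_INR in *; lra).
        apply rgamma_nonpos_int. }
    rewrite (rsum_first p), odelta_0.
    rewrite (rsum_ext p (fun k => rising_kernel (a - INR p + INR k) (INR p + INR (S m)) * odelta k (odelta 1 f) b)
                        (fun k => rising_kernel (a - INR (S p) + INR (S k)) (b - t) * odelta (S k) f b)).
    2:{ intros k _. rewrite odelta_comp_1. f_equal.
        apply rising_kernel_ext; unfold t; rewrite !S_INR; ring. }
    replace (rising_kernel (a - INR (S p) + INR 0) (INR (S p) + INR m))
      with (rising_kernel (a - 1 - INR p) (b - t))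
      by (apply rising_kernel_ext; unfold t; rewrite !S_INR; simpl; ring).
    replace (INR (S p) + INR m) with (b - t) by (unfold t; rewrite !S_INR; ring).
    ring.
Qed.

Theorem theorem2p10 (alpha : R) (p : nat) (b : R) (f : R -> R) :
  (0 < p)%nat ->
  forall t : R, (exists m : nat, t = b - INR p - INR m) ->
    nabla_op b alpha (odelta p f) t =
    odelta p (nabla_op b alpha f) t
    - rsum p (fun k =>
        rising (b - t) (alpha - INR p + INR k)
        / Gamma (alpha + INR k - INR p + 1)
        * odelta k f b).
Proof.
  intros Hp t [m ->]. destruct p as [|p]; [lia |].
  rewrite nabla_op_odelta. f_equal. apply rsum_ext. intros k _. f_equal.
  (* x^{(be)} / Gamma(be + 1) is the kernel, written with 1/Gamma *)
  unfold rising_kernel. rewrite rising_rgamma. unfold Rdiv at 2. rewrite Gamma_inv.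
  replace (b - (b - INR (S p) - INR m)) with (INR (S p) + INR m) by ring.
  replace (alpha + INR k - INR (S p) + 1) with (alpha - INR (S p) + INR k + 1) by ring.
  reflexivity.
Qed.
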